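(* Let $C_n(a,b)$ be a connected $2$-regular circulant digraph, let $l\ge1$, $0\le k\le l$ with $la+k(b-a)=\omega n$ for a positive integer $\omega$, and let $Q$ be the set of positive divisors of $\gcd(l,k)$ that are coprime with $\omega$. Then $\varphi$ maps $\bigcup_{q\in Q}\mathbb{L}_2^q(l,k)\times\mathbb{Z}_n$ into $\mathcal{P}_{l,k}(C_n(a,b))$, and this map is surjective.
   Context: Let $n\ge 2$ and $0<a<b<n$ be integers with $\gcd(n,a,b)=1$. $C_n(a,b)$ has vertex set $\mathbb{Z}_n$ and directed bonds $(v,v+a)$, $(v,v+b)$ (addition mod $n$), with step sizes $a$, $b$. A path of length $l$ is a sequence of bonds $(e_1,\dots,e_l)$ with the terminus of $e_j$ equal to the origin of $e_{j+1}$; its $b$-count is the number of bonds of step size $b$; its step sequence is the sequence of step sizes; a circuit is a path whose last terminus equals its first origin. A periodic orbit is an equivalence class of circuits under cyclic rotation; it is primitive if it is not $[c_0^r]$ for a circuit $c_0$ and $r>1$ ($c_0^r$ = concatenation of $r$ copies). $\mathcal{P}_{l,k}(C_n(a,b))$ is the set of primitive periodic orbits of length $l$ and $b$-count $k$. Words over $\{a,b\}$ are ordered lexicographically with $a\prec b$; a word is Lyndon if strictly smaller than all its nontrivial cyclic rotations; $\mathbb{L}_2(l,k)$ is the set of Lyndon words of length $l$ with exactly $k$ letters $b$, and for $q\mid\gcd(l,k)$, $\mathbb{L}_2^q(l,k)=\{x^q: x\in\mathbb{L}_2(l/q,k/q)\}$. Identifying letters $a,b$ with step sizes $a,b$, $\psi(w,v)$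 is the unique path starting at vertex $v$ with step sequence $w$; when it is a circuit, $\varphi(w,v)=[\psi(w,v)]$. *)

From mathcomp Require Import all_boot.
Set Implicit Arguments. Unset Strict Implicit. Unset Printing Implicit Defensive.

(* Words over {a,b}: seq bool, with false = letter a, true = letter b (a < b). *)

Fixpoint lexlt (s t : seq bool) : bool :=
  match s, t with
  | [::], [::] => false
  | [::], _ :: _ => true
  | _ :: _, [::] => false
  | x :: s', y :: t' => (~~ x && y) || ((x == y) && lexlt s' t')
  end.

Definition lyndon (w : seq bool) : bool :=
  [forall i : 'I_(size w), (0 < i) ==> lexlt w (rot i w)].

Definition inL2 (l k : nat) (w : seq bool) : bool :=
  [&& lyndon w, size w == l & count id w == k].

Definition wpow {T : Type} (q : nat) (x : seq T) : seq T := flatten (nseq q x).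

Definition inL2q (q l k : nat) (w : seq bool) : Prop :=
  exists2 x, inL2 (l %/ q) (k %/ q) x & w = wpow q x.

Definition inQ (l k om q : nat) : bool :=
  [&& 0 < q, q %| gcdn l k & coprime q om].

Section Circulant.
Variables (n a b : nat).

Definition bond (e : nat * nat) : bool :=
  (e.1 < n) && ((e.2 == (e.1 + a) %% n) || (e.2 == (e.1 + b) %% n)).

Definition is_bstep (e : nat * nat) : bool := e.2 == (e.1 + b) %% n.

Definition b_count (c : seq (nat * nat)) : nat := count is_bstep c.

Definition is_path (c : seq (nat * nat)) : bool :=
  all bond c &&
  match c with
  | [::] => true
  | e :: c' => path (fun e f => e.2 == f.1) e c'
  end.

Definition is_circuit (c : seq (nat * nat)) : bool :=
  is_path c &&
  match c with
  | [::] => false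
  | e :: c' => (last e c').2 == e.1
  end.

Definition same_orbit (c c' : seq (nat * nat)) : Prop :=
  exists i, c' = rot i c.

Definition primitive_orbit (c : seq (nat * nat)) : Prop :=
  ~ exists c0 r, 1 < r /\ is_circuit c0 /\ same_orbit (wpow r c0) c.

Definition in_P (l k : nat) (c : seq (nat * nat)) : Prop :=
  [/\ is_circuit c, primitive_orbit c, size c = l & b_count c = k].

Fixpoint psi (w : seq bool) (v : nat) : seq (nat * nat) :=
  match w with
  | [::] => [::]
  | x :: w' => let u := (v + (if x then b else a)) %% n in (v, u) :: psi w' u
  end.

End Circulant.

(* A circuit of C_n(a,b) is determined by its first vertex and its step sequence, and
   the walk psi(w, v) closes up iff n divides the displacement |w| a + #_b(w) (b - a).
   Every step sequence is a rotation of a power y^q of a Lyndon word y: take its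
   lexicographically least rotation and the least period of that rotation.  When
   q (|y| a + #_b(y) (b - a)) = om n, the walk along y^t from v closes iff
   q / gcd(q, om) divides t.  So for q coprime with om the circuit psi(y^q, v) is
   primitive: a decomposition [c0^r] would make |c0| a period of y^q, hence (y having
   no nontrivial period) a multiple t |y| with t < q whose walk closes.  Conversely a
   common factor g > 1 of q and om exhibits psi(y^q, v) as [psi(y^(q/g), v)^g]. *)

From mathcomp Require Import all_boot zify.

Lemma lexltxx s : lexlt s s = false.
Proof. by elim: s => //= x s ->; case: x. Qed.

Lemma lexlt_trans s t u : lexlt s t -> lexlt t u -> lexlt s u.
Proof.
elim: s t u => [|x s IH] [|y t] [|z u] //=.
by case: x; case: y; case: z => //=; apply: IH.
Qed.

Lemma lexlt_total {s t} : size s = size t -> s != t -> lexlt s t || lexlt t s.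
Proof.
elim: s t => [|x s IH] [|y t] //= [] st.
by rewrite eqseq_cons negb_and; case: x; case: y => //= ?; apply: IH.
Qed.

Lemma lexlt_cat_prefix {s t s' t'} :
  size s = size t -> lexlt (s ++ s') (t ++ t') -> lexlt s t || (s == t).
Proof.
elim: s t => [|x s IH] [|y t] //= [] st.
by rewrite eqseq_cons; case: x; case: y => //=; apply: IH.
Qed.

Section WordPowers.
Context {T : Type}.
Implicit Types x : seq T.

Lemma wpowS q x : wpow q.+1 x = x ++ wpow q x.
Proof. by []. Qed.

Lemma wpowD p q x : wpow (p + q) x = wpow p x ++ wpow q x.
Proof. by elim: p => //= p IH; rewrite !wpowS IH catA. Qed.

Lemma wpowSr q x : wpow q.+1 x = wpow q x ++ x.
Proof. by rewrite -addn1 wpowD /wpow /= cats0. Qed.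

Lemma wpowM p q x : wpow p (wpow q x) = wpow (p * q) x.
Proof. by elim: p => // p IH; rewrite wpowS IH mulSn wpowD. Qed.

Lemma size_wpow q x : size (wpow q x) = q * size x.
Proof. by elim: q => // q IH; rewrite wpowS size_cat IH mulSn. Qed.

Lemma count_wpow (P : pred T) q x : count P (wpow q x) = q * count P x.
Proof. by elim: q => // q IH; rewrite wpowS count_cat IH mulSn. Qed.

Lemma take_wpow t q x : t <= q -> take (t * size x) (wpow q x) = wpow t x.
Proof. by move=> /subnK <-; rewrite addnC wpowD take_size_cat // size_wpow. Qed.

Lemma rot_size_wpow q x : rot (size x) (wpow q x) = wpow q x.
Proof. by case: q => // q; rewrite wpowS rot_size_cat -wpowSr. Qed.

Lemma rot_wpow i q x : i <= size x -> rot i (wpow q x) = wpow q (rot i x).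
Proof.
move=> le_i; case: q => // q.
rewrite -(cat_take_drop i x); set y := take i x; set z := drop i x.
have size_y : size y = i by rewrite size_take; case: ltngtP le_i => // ->.
have shift m : z ++ wpow m (y ++ z) ++ y = wpow m.+1 (z ++ y).
  elim: m => [|m IH]; first by rewrite /wpow /= cats0.
  by rewrite wpowS -!catA IH [RHS]wpowS -catA.
by rewrite wpowS /rot -catA -size_y !drop_size_cat // !take_size_cat // -catA shift.
Qed.

Lemma rot_fixed_subn m p x : p <= m -> m <= size x ->
  rot m x = x -> rot p x = x -> rot (m - p) x = x.
Proof. by move=> le_pm le_m fix_m fix_p; rewrite -{1}fix_p -rotD subnK. Qed.

Lemma rot_fixed_gcdn m p x : m <= size x -> p <= size x ->
  rot m x = x -> rot p x = x -> rot (gcdn m p) x = x.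
Proof.
move: {2}(m + p) (leqnn (m + p)) => N.
elim: N m p => [|N IH] [|m] [|p] le_N le_m le_p fix_m fix_p;
  rewrite ?gcd0n ?gcdn0 //.
case: (leqP m p) => [le_mp | lt_pm].
- rewrite -[p.+1](subnK (le_mp : m.+1 <= p.+1)) gcdnDr.
  by apply: IH => //; [lia | lia | exact: rot_fixed_subn].
- rewrite -[m.+1](subnK (ltnW lt_pm : p.+1 <= m.+1)) gcdnC gcdnDr gcdnC.
  by apply: IH => //; [lia | lia | apply: rot_fixed_subn => //; exact: ltnW].
Qed.
End WordPowers.

Section WordPowersEq.
Context {T : eqType}.
Implicit Types x y z : seq T.

Lemma wpow_inj {q y z} : 0 < q -> size y = size z -> wpow q y = wpow q z -> y = z.
Proof. by case: q => // q _ size_yz /eqP; rewrite !wpowS eqseq_cat // => /andP[/eqP]. Qed.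

Lemma cat_comm_wpow q y z : size z = q * size y -> z ++ y = y ++ z -> z = wpow q y.
Proof.
elim: q z => [|q IH] z size_z comm; first by case: z size_z {comm}.
have le_yz : size y <= size z by rewrite size_z mulSn leq_addr.
have [z' def_z] : exists z', z = y ++ z'.
  exists (drop (size y) z).
  by rewrite -{1}(cat_take_drop (size y) z) -(takel_cat y le_yz) comm take_size_cat.
subst z; rewrite wpowS; congr (_ ++ _); apply: IH.
  by move/eqP: size_z; rewrite size_cat mulSn eqn_add2l => /eqP.
by move/eqP: comm; rewrite -!catA eqseq_cat // => /andP[_ /eqP].
Qed.

Lemma rot_fixed_wpow {p z} : 0 < p -> p %| size z -> rot p z = z ->
  z = wpow (size z %/ p) (take p z).
Proof.
move=> p_gt0 /dvdnP[r size_z] fix_p.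
rewrite size_z mulnK //; case: r size_z => [|r] size_z.
  by apply/eqP; rewrite -size_eq0 size_z.
have le_pz : p <= size z by rewrite size_z leq_pmull.
rewrite -[z in LHS](cat_take_drop p) wpowS; congr (_ ++ _).
have size_take_p : size (take p z) = p by rewrite size_takel.
apply: cat_comm_wpow.
  by rewrite size_drop size_take_p size_z mulSn addKn.
by rewrite -/(rot p z) fix_p cat_take_drop.
Qed.

Lemma least_rot_period {z} : 0 < size z -> exists p,
  [/\ 0 < p, p %| size z, rot p z = z & forall i, 0 < i < p -> rot i z != z].
Proof.
move=> z_gt0.
have has_period : exists p, [&& 0 < p, p <= size z & rot p z == z].
  by exists (size z); rewrite z_gt0 leqnn rot_size eqxx.
case: (ex_minnP has_period) => p /and3P[p_gt0 le_pz /eqP fix_p] least_p.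
have fix_gcd : rot (gcdn p (size z)) z = z by rewrite rot_fixed_gcdn ?rot_size.
have le_p_gcd : p <= gcdn p (size z).
  apply: least_p; rewrite gcdn_gt0 p_gt0 fix_gcd eqxx andbT /=.
  exact: dvdn_leq (dvdn_gcdr _ _).
have gcd_p : gcdn p (size z) = p.
  by apply/eqP; rewrite eqn_leq le_p_gcd andbT dvdn_leq ?dvdn_gcdl.
exists p; split=> // [|i /andP[i_gt0 lt_ip]]; first by rewrite -gcd_p dvdn_gcdr.
apply/eqP => fix_i; have := least_p i; rewrite i_gt0 fix_i eqxx andbT.
by rewrite (leq_trans (ltnW lt_ip)) // leqNgt lt_ip => /(_ isT).
Qed.

End WordPowersEq.

Lemma lyndon_rot_fixed {x d} : lyndon x -> 0 < d < size x -> rot d x != x.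
Proof.
move=> /forallP Lx /andP[d_gt0 lt_dx]; apply/eqP => fix_d.
by move: (Lx (Ordinal lt_dx)); rewrite /= d_gt0 fix_d lexltxx.
Qed.

Lemma lyndon_wpow_period {x q m} : lyndon x -> m <= q * size x ->
  rot m (wpow q x) = wpow q x -> size x %| m.
Proof.
move=> Lx le_m fix_m; have [->|m_gt0] := posnP m; first exact: dvdn0.
have /andP[q_gt0 x_gt0] : (0 < q) && (0 < size x).
  by rewrite -muln_gt0 (leq_trans m_gt0).
have fix_d : rot (gcdn m (size x)) (wpow q x) = wpow q x.
  by rewrite rot_fixed_gcdn ?size_wpow ?leq_pmull ?rot_size_wpow.
have le_dx : gcdn m (size x) <= size x by rewrite dvdn_leq ?dvdn_gcdr.
suff <- : gcdn m (size x) = size x by rewrite dvdn_gcdl.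
apply/eqP; rewrite eqn_leq le_dx leqNgt; apply/negP => lt_dx.
have d_range : 0 < gcdn m (size x) < size x by rewrite gcdn_gt0 m_gt0.
move/eqP: (lyndon_rot_fixed Lx d_range); apply.
by apply: (wpow_inj q_gt0); rewrite ?size_rot // -rot_wpow.
Qed.

Lemma exists_least_rot s :
  exists2 j, j <= size s & forall i, i <= size s -> ~~ lexlt (rot i s) (rot j s).
Proof.
suff least_upto N : N <= size s -> exists2 j, j <= size s &
    forall i, i <= N -> ~~ lexlt (rot i s) (rot j s) by exact: least_upto.
elim: N => [|N IH] le_N.
  by exists 0 => // i; rewrite leqn0 => /eqP->; rewrite lexltxx.
have [j le_j least_j] := IH (ltnW le_N).
case lt_Nj: (lexlt (rot N.+1 s) (rot j s)).
- exists N.+1 => // i; rewrite leq_eqVlt => /predU1P[-> | /least_j]; first by rewrite lexltxx.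
  by apply: contra => lt_iN; exact: lexlt_trans lt_iN lt_Nj.
- by exists j => // i; rewrite leq_eqVlt => /predU1P[-> | /least_j //]; rewrite lt_Nj.
Qed.

Lemma exists_least_rot_self s : exists2 j, j <= size s &
  forall i, i <= size s -> ~~ lexlt (rot i (rot j s)) (rot j s).
Proof.
have [j le_j least_j] := exists_least_rot s.
exists j => // i le_i; rewrite rot_add_mod //.
by case: ifP => [le_ij | /negbT gt_ij]; apply: least_j; lia.
Qed.

Lemma lyndon_take_least_period t p :
  (forall i, i <= size t -> ~~ lexlt (rot i t) t) ->
  0 < p -> p %| size t -> rot p t = t -> (forall i, 0 < i < p -> rot i t != t) ->
  lyndon (take p t).
Proof.
move=> least_t p_gt0 dvd_p fix_p aperiodic.
set y := take p t; set q := size t %/ p.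
have def_t : t = wpow q y := rot_fixed_wpow p_gt0 dvd_p fix_p.
apply/forallP => -[i lt_iy]; apply/implyP => /= i_gt0.
have [lt_ip lt_it] : i < p /\ i < size t by move: lt_iy; rewrite size_take_min; lia.
have rot_t : rot i t = wpow q (rot i y) by rewrite {1}def_t rot_wpow // ltnW.
have not_fix : rot i t != t by rewrite aperiodic // i_gt0.
move: (lexlt_total (size_rot i t) not_fix).
rewrite (negbTE (least_t i (ltnW lt_it))) /= rot_t {1}def_t.
have [q' def_q] : exists q', q = q'.+1.
  by exists q.-1; rewrite prednK // /q divn_gt0 // dvdn_leq //; lia.
rewrite def_q !wpowS => /(lexlt_cat_prefix (esym (size_rot i y))) /orP[// | /eqP y_rot].
by move: not_fix; rewrite rot_t -y_rot -def_t eqxx.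
Qed.

Lemma lyndon_rotation {s} : 0 < size s ->
  exists j y q, [/\ j <= size s, lyndon y, 0 < q & rot j s = wpow q y].
Proof.
move=> s_gt0; have [j le_j least_j] := exists_least_rot_self s.
have rot_gt0 : 0 < size (rot j s) by rewrite size_rot.
have [p [p_gt0 dvd_p fix_p aperiodic]] := least_rot_period rot_gt0.
exists j, (take p (rot j s)), (size (rot j s) %/ p); split=> //.
- by apply: lyndon_take_least_period; rewrite // size_rot.
- by rewrite divn_gt0 // dvdn_leq.
- exact: rot_fixed_wpow.
Qed.

Lemma dvdn_mul_divgcd {q om n S} t : 0 < q -> 0 < n -> q * S = om * n ->
  (n %| t * S) = (q %/ gcdn q om %| t).
Proof.
move=> q_gt0 n_gt0 eqS.
have -> : (n %| t * S) = (q %| t * om).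
  by rewrite -(dvdn_pmul2r q_gt0) -mulnA [S * q]mulnC eqS mulnA mulnC dvdn_pmul2r.
rewrite dvdn_divLR ?gcdn_gt0 ?q_gt0 ?dvdn_gcdl // muln_gcdr dvdn_gcd.
by rewrite (dvdn_mull t (dvdnn q)).
Qed.

Section Walks.
Variables n a b : nat.

Definition step (x : bool) : nat := if x then b else a.

Fixpoint terminus (w : seq bool) (v : nat) : nat :=
  if w is x :: w' then terminus w' ((v + step x) %% n) else v.

(* [b - a] is truncated; [displacement] is the total step length only when [a <= b]. *)
Definition displacement (w : seq bool) : nat := size w * a + count id w * (b - a).

Definition step_seq (c : seq (nat * nat)) : seq bool := map (is_bstep n b) c.

End Walks.

Section CirculantWalks.
Context {n a b : nat}.
Local Notation psi := (psi n a b).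
Local Notation step := (step a b).
Local Notation terminus := (terminus n a b).
Local Notation displacement := (displacement a b).
Local Notation step_seq := (step_seq n b).

Lemma terminus_cat w1 w2 v : terminus (w1 ++ w2) v = terminus w2 (terminus w1 v).
Proof. by elim: w1 v => //= x w IH v. Qed.

Lemma mul_displacement q w :
  q * displacement w = (q * size w) * a + (q * count id w) * (b - a).
Proof. by rewrite mulnDr !mulnA. Qed.

Lemma displacement_wpow q w : displacement (wpow q w) = q * displacement w.
Proof. by rewrite mul_displacement /displacement size_wpow count_wpow. Qed.

Lemma psi_cat w1 w2 v : psi (w1 ++ w2) v = psi w1 v ++ psi w2 (terminus w1 v).
Proof. by elim: w1 v => //= x w IH v; rewrite IH. Qed.

Lemma size_psi w v : size (psi w v) = size w.
Proof. by elim: w v => //= x w IH v; rewrite IH. Qed.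

Lemma last_psi w e : (last e (psi w e.2)).2 = terminus w e.2.
Proof. by elim: w e => //= x w IH e; rewrite IH. Qed.

Lemma path_psi w e : path (fun e f => e.2 == f.1) e (psi w e.2).
Proof. by elim: w e => //= x w IH e; rewrite eqxx IH. Qed.

Lemma rot_psi j w v : terminus w v = v -> j <= size w ->
  rot j (psi w v) = psi (rot j w) (terminus (take j w) v).
Proof.
move=> loop le_j; rewrite -{1}(cat_take_drop j w) psi_cat /rot.
have size_take_psi : size (psi (take j w) v) = j by rewrite size_psi size_takel.
rewrite (drop_size_cat _ size_take_psi) (take_size_cat _ size_take_psi) psi_cat.
by rewrite -terminus_cat cat_take_drop loop.
Qed.

Lemma wpow_psi g w v : terminus w v = v -> wpow g (psi w v) = psi (wpow g w) v.
Proof. by move=> loop; elim: g => // g IH; rewrite !wpowS psi_cat loop IH. Qed.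

Hypothesis n_gt0 : 0 < n.

Lemma terminus_lt w v : v < n -> terminus w v < n.
Proof. by elim: w v => //= x w IH v _; rewrite IH ?ltn_pmod. Qed.

Lemma all_bond_psi w v : v < n -> all (bond n a b) (psi w v).
Proof.
elim: w v => //= x w IH v lt_v; rewrite IH ?ltn_pmod // andbT /bond /= lt_v.
by case: x; rewrite eqxx ?orbT.
Qed.

Lemma is_circuit_psi w v : v < n -> 0 < size w -> terminus w v = v ->
  is_circuit n a b (psi w v).
Proof.
case: w => // x w lt_v _ loop; rewrite /is_circuit /is_path all_bond_psi //=.
by rewrite (path_psi w (v, _)) (last_psi w (v, _)); apply/eqP.
Qed.

Hypotheses (lt_ab : a < b) (lt_bn : b < n).

Lemma terminus_small w v : v < n -> terminus w v = (v + displacement w) %% n.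
Proof.
elim: w v => [|x w IH] v lt_v /=; first by rewrite addn0 modn_small.
rewrite IH ?ltn_pmod // modnDml /displacement /step; congr (_ %% n); case: x => /=; lia.
Qed.

Lemma terminus_wpow_fixed t w v : v < n ->
  (terminus (wpow t w) v == v) = (n %| t * displacement w).
Proof.
move=> lt_v; rewrite terminus_small // displacement_wpow.
by rewrite -[X in _ == X](modn_small lt_v) -[X in _ == X %% n]addn0 eqn_modDl mod0n.
Qed.

Lemma step_seq_psi w v : step_seq (psi w v) = w.
Proof.
elim: w v => //= x w IH v; rewrite IH; congr (_ :: _).
rewrite /is_bstep /=; case: x; rewrite /= ?eqxx //.
by rewrite eqn_modDl !modn_small ?(ltn_trans lt_ab) // ltn_eqF.
Qed.

Lemma b_count_psi w v : b_count n b (psi w v) = count id w.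
Proof. by rewrite -{2}(step_seq_psi w v) count_map. Qed.

Lemma bond_step e : bond n a b e -> e.2 = (e.1 + step (is_bstep n b e)) %% n.
Proof.
case: e => u v /andP[/= _ /orP[] /eqP->]; rewrite /is_bstep /step /= ?eqxx //.
by case: ifP => // /eqP.
Qed.

Lemma psi_step_seq {e c} : all (bond n a b) (e :: c) -> path (fun e f => e.2 == f.1) e c ->
  e :: c = psi (step_seq (e :: c)) e.1.
Proof.
elim: c e => [|f c IH] e /=.
  by rewrite andbT => /bond_step e2 _; rewrite {1}[e]surjective_pairing e2.
case/and3P => /bond_step e2 bond_f bond_c /andP[/eqP ef path_c].
rewrite {1}[e]surjective_pairing e2 -e2 ef; congr (_ :: _).
by apply: IH; rewrite //= bond_f.
Qed.

Lemma circuit_psi_step_seq {c} : is_circuit n a b c ->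
  exists2 v, v < n & c = psi (step_seq c) v /\ terminus (step_seq c) v = v.
Proof.
case: c => // e c /andP[/andP[bonds path_c] /eqP last_c].
have def_c := psi_step_seq bonds path_c.
have /andP[/bond_step e2 _] := bonds.
have def_tail : c = psi (step_seq c) e.2 by case: def_c; rewrite -e2.
exists e.1; first by case/andP: bonds => /andP[].
by split=> //=; rewrite -e2 -(last_psi _ e) -def_tail.
Qed.

Lemma rot_psi_fixed {m w v} : terminus w v = v -> m <= size w ->
  rot m (psi w v) = psi w v -> rot m w = w /\ terminus (take m w) v = v.
Proof.
move=> loop le_m; rewrite rot_psi // => fix_m.
have fix_w : rot m w = w by rewrite -[RHS](step_seq_psi w v) -fix_m step_seq_psi.
split=> //; move: fix_m; rewrite fix_w.
by case: w {le_m loop fix_w} => [|x w] //= [].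
Qed.

Lemma primitive_psi_lyndon q x v : lyndon x -> v < n -> terminus (wpow q x) v = v ->
  (forall t, terminus (wpow t x) v = v -> q %| t) ->
  primitive_orbit n a b (psi (wpow q x) v).
Proof.
move=> Lx lt_v loop period [c0 [r [gt_r1 [circ0 [i def_c]]]]].
set w := wpow q x in loop def_c.
have m_gt0 : 0 < size c0 by case: (c0) circ0.
have size_w : size w = r * size c0 by rewrite -(size_psi w v) def_c size_rot size_wpow.
have lt_mw : size c0 < size w by rewrite size_w ltn_Pmull.
have fix_m : rot (size c0) (psi w v) = psi w v by rewrite def_c rot_rot rot_size_wpow.
have [fix_w back] := rot_psi_fixed loop (ltnW lt_mw) fix_m.
have /dvdnP[t def_m] : size x %| size c0.
  by apply: (lyndon_wpow_period Lx _ fix_w); rewrite -size_wpow ltnW.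
have [t_gt0 x_gt0] : 0 < t /\ 0 < size x by apply/andP; rewrite -muln_gt0 -def_m.
have lt_tq : t < q by rewrite -(ltn_pmul2r x_gt0) -def_m -size_wpow.
move: back; rewrite def_m take_wpow ?(ltnW lt_tq) // => /period /(dvdn_leq t_gt0).
by rewrite leqNgt lt_tq.
Qed.

Lemma psi_wpow_not_primitive g w u i : 1 < g -> 0 < size w -> u < n -> terminus w u = u ->
  ~ primitive_orbit n a b (rot i (psi (wpow g w) u)).
Proof.
move=> gt_g1 w_gt0 lt_u loop; apply; exists (psi w u), g; split=> //; split.
  exact: is_circuit_psi.
by exists i; rewrite wpow_psi.
Qed.

Lemma circuit_rot_psi_lyndon {c} : is_circuit n a b c ->
  exists y q u i, [/\ lyndon y, 0 < q, u < n & c = rot i (psi (wpow q y) u)].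
Proof.
move=> circ; have [v lt_v [def_c loop]] := circuit_psi_step_seq circ.
have s_gt0 : 0 < size (step_seq c) by rewrite size_map; case: (c) circ.
have [j [y [q [le_j Ly q_gt0 rot_s]]]] := lyndon_rotation s_gt0.
exists y, q, (terminus (take j (step_seq c)) v), (size c - j); split=> //.
  exact: terminus_lt.
by rewrite -rot_s -rot_psi // -def_c -{1}(rotK j c) /rotr size_rot.
Qed.

Lemma in_P_psi_wpow_lyndon {om q x v} : 0 < q -> coprime q om -> lyndon x ->
  0 < size x -> v < n -> q * displacement x = om * n ->
  in_P n a b (q * size x) (q * count id x) (psi (wpow q x) v).
Proof.
move=> q_gt0 co_q Lx x_gt0 lt_v disp_x.
have period t : terminus (wpow t x) v = v -> q %| t.
  move/eqP; rewrite terminus_wpow_fixed // (dvdn_mul_divgcd t q_gt0 n_gt0 disp_x).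
  by rewrite (eqP co_q) divn1.
have loop : terminus (wpow q x) v = v.
  by apply/eqP; rewrite terminus_wpow_fixed // disp_x dvdn_mull.
split; first by apply: is_circuit_psi; rewrite // size_wpow muln_gt0 q_gt0.
- exact: primitive_psi_lyndon.
- by rewrite size_psi size_wpow.
- by rewrite b_count_psi count_wpow.
Qed.

Lemma in_P_lyndon_factor {l k om c} : l * a + k * (b - a) = om * n -> in_P n a b l k c ->
  exists y q u i, [/\ lyndon y, coprime q om, u < n, c = rot i (psi (wpow q y) u)
                    & q * size y = l /\ q * count id y = k].
Proof.
move=> disp_lk [circ prim size_c count_c].
have [y [q [u [i [Ly q_gt0 lt_u def_c]]]]] := circuit_rot_psi_lyndon circ.
have size_y : q * size y = l by rewrite -size_c def_c size_rot size_psi size_wpow.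
have count_y : q * count id y = k.
  rewrite -count_c def_c /b_count (permP (permEl (perm_rot _ _))).
  by rewrite -/(b_count n b _) b_count_psi count_wpow.
have disp_y : q * displacement y = om * n.
  by rewrite mul_displacement size_y count_y.
exists y, q, u, i; split=> //; apply: contraT => not_co; exfalso.
have /andP[_ y_gt0] : (0 < q) && (0 < size y).
  by rewrite -muln_gt0 size_y -size_c; case: (c) circ.
have g_gt1 : 1 < gcdn q om.
  by move: not_co; rewrite /coprime ltn_neqAle eq_sym gcdn_gt0 q_gt0 => ->.
move: prim; rewrite def_c -(divnK (dvdn_gcdl q om)) mulnC -wpowM.
apply: psi_wpow_not_primitive => //.
  by rewrite size_wpow muln_gt0 y_gt0 divn_gt0 ?gcdn_gt0 ?q_gt0 // dvdn_leq ?dvdn_gcdl.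
by apply/eqP; rewrite terminus_wpow_fixed // (dvdn_mul_divgcd _ q_gt0 n_gt0 disp_y).
Qed.

End CirculantWalks.

Theorem mainTheorem14 (n a b l k om : nat)
  (hn : 2 <= n) (ha : 0 < a) (hab : a < b) (hbn : b < n)
  (hgcd : gcdn (gcdn n a) b = 1)
  (hl : 1 <= l) (hkl : k <= l) (hom : 0 < om)
  (heq : l * a + k * (b - a) = om * n) :
  (forall q w v, inQ l k om q -> inL2q q l k w -> v < n ->
     is_circuit n a b (psi n a b w v) /\ in_P n a b l k (psi n a b w v))
  /\
  (forall c, in_P n a b l k c ->
     exists q w v, [/\ inQ l k om q, inL2q q l k w, v < n &
                      same_orbit (psi n a b w v) c]).
Proof.
have n_gt0 : 0 < n by exact: ltnW.
split.
- move=> q _ v /and3P[q_gt0 dvd_q co_q] [x /and3P[Lx /eqP size_x /eqP count_x] ->] lt_v.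
  move: dvd_q; rewrite dvdn_gcd => /andP[dvd_l dvd_k].
  have size_w : q * size x = l by rewrite size_x mulnC divnK.
  have count_w : q * count id x = k by rewrite count_x mulnC divnK.
  have x_gt0 : 0 < size x by move: hl; rewrite -size_w muln_gt0 => /andP[].
  have disp_x : q * displacement a b x = om * n.
    by rewrite mul_displacement size_w count_w.
  have := in_P_psi_wpow_lyndon n_gt0 hab hbn q_gt0 co_q Lx x_gt0 lt_v disp_x.
  by rewrite size_w count_w => inP; split=> //; case: inP.
- move=> c /(in_P_lyndon_factor n_gt0 hab hbn heq).
  case=> y [q [u [i [Ly co_q lt_u def_c [size_y count_y]]]]].
  have q_gt0 : 0 < q by move: hl; rewrite -size_y muln_gt0 => /andP[].
  exists q, (wpow q y), u; split=> //; last by exists i.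
  + by rewrite /inQ q_gt0 dvdn_gcd -size_y -count_y !dvdn_mulr.
  + by exists y; rewrite // /inL2 Ly -size_y -count_y !mulKn // !eqxx.
Qed.
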